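(* Let $\mathcal{W}=\{W_s:s\in\mathcal{S}\}$ be an arbitrarily varying channel with channel state sequence known at the receiver (AVC-CSR), with finite alphabets $\mathcal{X},\mathcal{Y}$ and finite state set $\mathcal{S}$. The capacity $C^{CSR-DC}(\mathcal{W})$ of deterministic code with respect to the maximal decoding error probability is positive if and only if there exist $x,x'\in\mathcal{X}$ such that for every state $s\in\mathcal{S}$ there exists $y\in\mathcal{Y}$ with $W_s(y|x)\neq W_s(y|x')$.
   Context: For an AVC-CSR, $W(y^N|x^N,s^N)=\prod_{i=1}^NW_{s_i}(y_i|x_i)$; the state sequence $s^N\in\mathcal{S}^N$ is arbitrary, unknown to the transmitter and known to the receiver. A deterministic code of length $N$ is a pair $(f,\phi)$, $f:\mathcal{M}\to\mathcal{X}^N$, $\phi:\mathcal{Y}^N\times\mathcal{S}^N\to\mathcal{M}$, with maximal decoding error $\lambda^{CSR}(\mathcal{W},f,\phi)=\max_{s^N\in\mathcal{S}^N}\max_{m\in\mathcal{M}}\big[1-\sum_{y^N:\phi(y^N,s^N)=m}W(y^N|f(m),s^N)\big]$. $C^{CSR-DC}(\mathcal{W})$ is the supremum of $R\ge0$ such that for every $\epsilon>0$ and all sufficiently large $N$ there is a deterministic code with $\frac1N\log|\mathcal{M}|>R-\epsilon$ and $\lambda^{CSR}(\mathcal{W},f,\phi)<\epsilon$. *)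

From HB Require Import structures.
From mathcomp Require Import all_boot all_order all_algebra.
From mathcomp Require Import all_classical all_reals all_analysis.
Set Implicit Arguments. Unset Strict Implicit. Unset Printing Implicit Defensive.
Import Order.TTheory GRing.Theory Num.Theory.
Local Open Scope ring_scope.

Section AVC.
Variables (R : realType) (X Y S : finType).

(* An AVC: family of channels W_s(y|x), given as W s x y. *)
Definition stochastic_avc (W : S -> X -> Y -> R) : Prop :=
  forall s x, (forall y, 0 <= W s x y) /\ \sum_(y : Y) W s x y = 1.

Definition avc_prod (W : S -> X -> Y -> R) (N : nat)
  (xN : {ffun 'I_N -> X}) (sN : {ffun 'I_N -> S}) (yN : {ffun 'I_N -> Y}) : R :=
  \prod_(i < N) W (sN i) (xN i) (yN i).

Definition lambda_CSR (W : S -> X -> Y -> R) (N M : nat)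
  (f : 'I_M -> {ffun 'I_N -> X})
  (phi : {ffun 'I_N -> Y} -> {ffun 'I_N -> S} -> 'I_M) : R :=
  \big[Num.max/0]_(sN : {ffun 'I_N -> S})
    \big[Num.max/0]_(m : 'I_M)
      (1 - \sum_(yN : {ffun 'I_N -> Y} | phi yN sN == m) avc_prod W (f m) sN yN).

Definition achievable_CSR_DC (W : S -> X -> Y -> R) (R0 : R) : Prop :=
  0 <= R0 /\
  forall eps : R, 0 < eps ->
    exists N0 : nat, forall N : nat, (N0 <= N)%N ->
      exists (M : nat) (f : 'I_M -> {ffun 'I_N -> X})
             (phi : {ffun 'I_N -> Y} -> {ffun 'I_N -> S} -> 'I_M),
        (0 < M)%N /\
        R0 - eps < (ln (M%:R : R) / ln 2) / N%:R /\
        lambda_CSR W f phi < eps.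

Definition cap_CSR_DC (W : S -> X -> Y -> R) : \bar R :=
  ereal_sup [set (r%:E) | r in [set r | achievable_CSR_DC W r]].

End AVC.

From HB Require Import structures.
From mathcomp Require Import all_boot all_order all_algebra.
From mathcomp Require Import all_classical all_reals all_analysis.
From mathcomp Require Import ring lra zify.
Import Order.TTheory GRing.Theory Num.Theory.
Local Open Scope ring_scope.
Set Implicit Arguments. Unset Strict Implicit. Unset Printing Implicit Defensive.

(* If x0 and x1 are distinguishable under every state, then
   rho := max_s sum_y sqrt (W_s(y|x0) W_s(y|x1)) is < 1.  Spell a binary code
   of minimum distance > N/8 with x0, x1 (Gilbert-Varshamov provides
   2 ^ (N/8) such words) and decode by maximum likelihood given the state
   sequence: by the union-Bhattacharyya bound every message is decoded
   wrongly with probability at most M * rho ^ (N/8), so with rho ^ t <= 1/4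
   codes of 2 ^ (N/(8t)) messages have error at most 2 ^ (-N/(8t)), a
   positive rate.  Conversely, if every pair of inputs is confused by some
   state, the state sequence can be chosen letter by letter so that two
   codewords induce the same output distribution, and one of the two
   messages is then decoded wrongly with probability at least 1/2. *)

Lemma leq_expn2r m n e : (m <= n)%N -> (m ^ e <= n ^ e)%N.
Proof. by move=> le_mn; elim: e => // e ih; rewrite !expnS leq_mul. Qed.

Section HammingCodes.
Local Open Scope nat_scope.
Variable N : nat.
Local Notation word := {ffun 'I_N -> bool}.

Definition hamming (c c' : word) : nat := \sum_i (c i != c' i).

Lemma hammingC c c' : hamming c c' = hamming c' c.
Proof. by apply: eq_bigr => i _; rewrite eq_sym. Qed.

Lemma hammingxx c : hamming c c = 0.
Proof. by apply: big1 => i _; rewrite eqxx. Qed.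

Definition hamming_ball (c : word) r := [set w : word | hamming c w <= r].

(* Weight each word w by 2 ^ (number of positions where w agrees with c):
   the weights sum to 3 ^ N, and inside the ball each weight is at least
   2 ^ (N - r). *)
Lemma card_hamming_ball_le c r : #|hamming_ball c r| * 2 ^ N <= 2 ^ r * 3 ^ N.
Proof.
pose agree (w : word) := \sum_i (c i == w i).
have hamming_agree w : hamming c w + agree w = N.
  rewrite -big_split /= -[RHS]card_ord -sum1_card.
  by apply: eq_bigr => i _; rewrite addn_negb.
have -> : 3 ^ N = \sum_(w : word) 2 ^ agree w.
  under [RHS]eq_bigr do rewrite expn_sum.
  rewrite -(bigA_distr_bigA (fun i b => 2 ^ (c i == b))) /=.
  rewrite -[in LHS](card_ord N) -prod_nat_const.
  by apply: eq_bigr => i _; rewrite big_bool; case: (c i).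
rewrite -sum1_card !big_distrl big_distrr /=.
apply: (@leq_trans (\sum_(w in hamming_ball c r) 2 ^ r * 2 ^ agree w)).
  apply: leq_sum => w; rewrite inE mul1n -expnD -{1}(hamming_agree w) => hw.
  by rewrite leq_exp2l // leq_add2r.
by rewrite [leqRHS](bigID (mem (hamming_ball c r))) /= leq_addr.
Qed.

Definition separated r (C : {set word}) :=
  [forall c in C, forall c' in C, (c != c') ==> (r < hamming c c')].

Lemma separatedP r (C : {set word}) :
  reflect (forall c c', c \in C -> c' \in C -> c != c' -> r < hamming c c')
          (separated r C).
Proof.
apply: (iffP forall_inP) => [sepC c c' cC c'C | sepC c cC].
  by move/forall_inP/(_ c' c'C)/implyP: (sepC c cC).
by apply/forall_inP => c' c'C; apply/implyP; apply: sepC.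
Qed.

Lemma separated_setU1 r (C : {set word}) w : separated r C ->
  (forall c, c \in C -> r < hamming c w) -> separated r (w |: C).
Proof.
move=> /separatedP sepC far; apply/separatedP.
move=> c c' /setU1P[->|cC] /setU1P[->|c'C]; rewrite ?eqxx // => neq.
- by rewrite hammingC far.
- exact: far.
- exact: sepC.
Qed.

(* Gilbert-Varshamov: the balls around a maximal r-separated code cover all
   2 ^ N words. *)
Lemma exists_separated_code r : exists2 C : {set word},
  separated r C & 2 ^ N * 2 ^ N <= #|C| * (2 ^ r * 3 ^ N).
Proof.
have sep0 : separated r finset.set0 by apply/separatedP => c c'; rewrite finset.in_set0.
have [C sepC Cmax] := arg_maxnP (fun C : {set word} => #|C|) sep0.
exists C => //.
have cover w : [exists c in C, w \in hamming_ball c r].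
  apply: contraT => /exists_inPn far.
  have {}far c : c \in C -> r < hamming c w by move/far; rewrite inE -ltnNge.
  have wC : w \notin C by apply/negP => /far; rewrite hammingxx.
  by have := Cmax _ (separated_setU1 sepC far); rewrite cardsU1 wC; lia.
have covered : \sum_(w : word) 1 <= \sum_(c in C) #|hamming_ball c r|.
  under [leqRHS]eq_bigr do rewrite -sum1_card.
  rewrite (exchange_big_dep xpredT) //=; apply: leq_sum => w _.
  have /exists_inP[c cC wc] := cover w.
  by rewrite (bigD1 c) ?cC //=.
rewrite sum1_card card_ffun card_bool card_ord in covered.
apply: leq_trans (leq_mul covered (leqnn (2 ^ N))) _.
rewrite big_distrl /= -sum_nat_const.
by apply: leq_sum => c _; apply: card_hamming_ball_le.
Qed.

Lemma exists_separated_code_large :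
  exists2 C : {set word}, separated (N %/ 8) C & 2 ^ (N %/ 8) <= #|C|.
Proof.
set r := N %/ 8.
have [C sepC sizeC] := exists_separated_code r.
exists C => //.
have vol : 4 ^ r * 3 ^ N <= 4 ^ N.
  rewrite {1 2}(divn_eq N 8) -/r !expnD mulnA leq_mul ?leq_expn2r //.
  by rewrite !(mulnC r) !expnM -expnMn leq_expn2r.
rewrite -(@leq_pmul2r (2 ^ r * 3 ^ N)) ?muln_gt0 ?expn_gt0 //.
by apply: leq_trans sizeC; rewrite mulnA -expnMn -expnMn.
Qed.

End HammingCodes.

Lemma sqrtr_prod (R : rcfType) (I : finType) (F : I -> R) :
  (forall i, 0 <= F i) -> Num.sqrt (\prod_i F i) = \prod_i Num.sqrt (F i).
Proof.
move=> F_ge0; rewrite -[RHS]ger0_norm; last by apply: prodr_ge0 => i _; apply: sqrtr_ge0.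
rewrite -sqrtr_sqr -prodrXl; congr Num.sqrt; apply: eq_bigr => i _.
by rewrite sqr_sqrtr.
Qed.

Section Bhattacharyya.
Variables (R : realType) (X Y S : finType) (W : S -> X -> Y -> R).
Hypothesis W_stochastic : stochastic_avc W.

Lemma avc_ge0 s x y : 0 <= W s x y.
Proof. by case: (W_stochastic s x). Qed.

Lemma avc_sum1 s x : \sum_y W s x y = 1.
Proof. by case: (W_stochastic s x). Qed.

Lemma avc_prod_ge0 N (xN : {ffun 'I_N -> X}) sN yN : 0 <= avc_prod W xN sN yN.
Proof. by apply: prodr_ge0 => i _; apply: avc_ge0. Qed.

Lemma avc_prod_sum1 N (xN : {ffun 'I_N -> X}) sN :
  \sum_(yN : {ffun 'I_N -> Y}) avc_prod W xN sN yN = 1.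
Proof.
rewrite /avc_prod -(bigA_distr_bigA (fun i y => W (sN i) (xN i) y)).
by apply: big1 => i _; apply: avc_sum1.
Qed.

Definition bhattacharyya s x x' := \sum_y Num.sqrt (W s x y * W s x' y).

Lemma bhattacharyya_ge0 s x x' : 0 <= bhattacharyya s x x'.
Proof. by apply: sumr_ge0 => y _; apply: sqrtr_ge0. Qed.

Lemma bhattacharyyaxx s x : bhattacharyya s x x = 1.
Proof.
rewrite /bhattacharyya -(avc_sum1 s x); apply: eq_bigr => y _.
by rewrite -expr2 sqrtr_sqr ger0_norm // avc_ge0.
Qed.

Lemma bhattacharyyaC s x x' : bhattacharyya s x x' = bhattacharyya s x' x.
Proof. by apply: eq_bigr => y _; rewrite mulrC. Qed.

(* 2 - 2 * bhattacharyya is the sum of the squared differences of the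
   square roots of the two output distributions. *)
Lemma bhattacharyya_lt1 s x x' y0 : W s x y0 <> W s x' y0 -> bhattacharyya s x x' < 1.
Proof.
move=> neq0.
pose d y := Num.sqrt (W s x y) - Num.sqrt (W s x' y).
have sum_d2 : \sum_y d y ^+ 2 =
    \sum_y W s x y + \sum_y W s x' y - 2 * bhattacharyya s x x'.
  rewrite /bhattacharyya mulr_sumr -!big_split -sumrB; apply: eq_bigr => y _.
  rewrite /d sqrrB !sqr_sqrtr ?avc_ge0 // sqrtrM ?avc_ge0 // -mulr_natl /=; ring.
have d0 : 0 < d y0 ^+ 2.
  rewrite lt_def sqr_ge0 andbT sqrf_eq0 subr_eq0; apply/eqP => eq_sqrt; apply: neq0.
  by rewrite -(sqr_sqrtr (avc_ge0 s x y0)) -(sqr_sqrtr (avc_ge0 s x' y0)) eq_sqrt.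
have : 0 < \sum_y d y ^+ 2.
  rewrite (bigD1 y0) //=; apply: (lt_le_trans d0).
  by rewrite lerDl; apply: sumr_ge0 => y _; apply: sqr_ge0.
rewrite sum_d2 !avc_sum1; lra.
Qed.

Lemma sum_sqrt_avc_prod N (xN xN' : {ffun 'I_N -> X}) sN :
  \sum_(yN : {ffun 'I_N -> Y}) Num.sqrt (avc_prod W xN sN yN * avc_prod W xN' sN yN)
  = \prod_i bhattacharyya (sN i) (xN i) (xN' i).
Proof.
rewrite /bhattacharyya.
rewrite (bigA_distr_bigA (fun i y => Num.sqrt (W (sN i) (xN i) y * W (sN i) (xN' i) y))).
apply: eq_bigr => yN _; rewrite /avc_prod -big_split /= sqrtr_prod //.
by move=> i; rewrite mulr_ge0 ?avc_ge0.
Qed.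

Definition ml_decoder N M (f : 'I_M -> {ffun 'I_N -> X}) (m0 : 'I_M)
  (yN : {ffun 'I_N -> Y}) (sN : {ffun 'I_N -> S}) : 'I_M :=
  [arg max_(m > m0) avc_prod W (f m) sN yN]%O.

Lemma ml_decoder_max N M (f : 'I_M -> {ffun 'I_N -> X}) m0 yN sN m :
  avc_prod W (f m) sN yN <= avc_prod W (f (ml_decoder f m0 yN sN)) sN yN.
Proof. by rewrite /ml_decoder; case: arg_maxP => // m' _; apply. Qed.

(* Union-Bhattacharyya bound: an output decoded to m' != m has
   P_m <= sqrt (P_m * P_m'). *)
Lemma ml_decoder_error_le N M (f : 'I_M -> {ffun 'I_N -> X}) m0 sN m :
  1 - \sum_(yN | ml_decoder f m0 yN sN == m) avc_prod W (f m) sN yN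
  <= \sum_(m' | m' != m) \prod_i bhattacharyya (sN i) (f m i) (f m' i).
Proof.
pose P m yN := avc_prod W (f m) sN yN.
pose dec yN := ml_decoder f m0 yN sN.
have misdecoded yN :
    dec yN != m -> P m yN <= \sum_(m' | m' != m) Num.sqrt (P m yN * P m' yN).
  move=> neq; rewrite (bigD1 (dec yN)) //= -[leLHS]addr0 lerD //; last first.
    by apply: sumr_ge0 => m' _; apply: sqrtr_ge0.
  rewrite /P -{1}(ger0_norm (avc_prod_ge0 (f m) sN yN)) -sqrtr_sqr expr2.
  by apply: ler_wsqrtr; rewrite ler_wpM2l ?avc_prod_ge0 ?ml_decoder_max.
rewrite -{1}(avc_prod_sum1 (f m) sN) (bigID (fun yN => dec yN == m)) /= addrC addrK.
apply: (@le_trans _ _ (\sum_yN \sum_(m' | m' != m) Num.sqrt (P m yN * P m' yN))).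
  rewrite [leLHS]big_mkcond; apply: ler_sum => yN _.
  case: ifPn => [|_]; first exact: misdecoded.
  by apply: sumr_ge0 => m' _; apply: sqrtr_ge0.
by rewrite exchange_big; apply: ler_sum => m' _; rewrite sum_sqrt_avc_prod.
Qed.

End Bhattacharyya.

Lemma exists_expr_lt (R : realType) (q e : R) :
  0 <= q < 1 -> 0 < e -> exists n : nat, q ^+ n < e.
Proof.
move=> /andP[q_ge0 q_lt1] e_gt0.
have q_norm_lt1 : `|q| < 1 by rewrite ger0_norm.
have /cvgr0_norm_lt/(_ _ e_gt0)[n _ qn_lt] := cvg_expr q_norm_lt1.
by exists n; have := qn_lt n (leqnn n); rewrite /= ger0_norm // exprn_ge0.
Qed.

Lemma log2_natrX (R : realType) k : ln ((2 ^ k)%N%:R : R) / ln 2 = k%:R.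
Proof.
have ln2_gt0 : 0 < ln (2 : R) by rewrite ln_gt0 // ltr1n.
by rewrite natrX lnXn // -[ln 2 *+ k]mulr_natr mulrAC divff ?mul1r ?gt_eqF.
Qed.

Lemma divn_ratio_ge (R : realFieldType) B N : (0 < B)%N -> (B <= N)%N ->
  (2 * B)%:R^-1 <= (N %/ B)%:R / N%:R :> R.
Proof.
move=> B_gt0 B_le_N; have N_gt0 : (0 < N)%N by apply: leq_trans B_le_N.
rewrite ler_pdivlMr ?ltr0n // mulrC ler_pdivrMr ?ltr0n ?muln_gt0 // -natrM ler_nat.
have := ltn_ceil N B_gt0; have : (1 <= N %/ B)%N by rewrite leq_divRL ?mul1n.
nia.
Qed.

Section Achievability.
Variables (R : realType) (X Y S : finType) (W : S -> X -> Y -> R).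
Hypothesis W_stochastic : stochastic_avc W.
Variables x0 x1 : X.
Hypothesis x01_distinguishable : forall s, exists y, W s x0 y <> W s x1 y.

Definition binary_encoder {N} (c : {ffun 'I_N -> bool}) : {ffun 'I_N -> X} :=
  [ffun i => if c i then x1 else x0].

Let rho : R := \big[Num.max/0]_s bhattacharyya W s x0 x1.

Let rho_ge0 : 0 <= rho. Proof. exact: bigmax_ge_id. Qed.

Let rho_lt1 : rho < 1.
Proof.
apply: bigmax_lt => // s _; have [y neq] := x01_distinguishable s.
exact: bhattacharyya_lt1 neq.
Qed.

Lemma prod_bhattacharyya_binary_le N (sN : {ffun 'I_N -> S})
    (c c' : {ffun 'I_N -> bool}) :
  \prod_i bhattacharyya W (sN i) (binary_encoder c i) (binary_encoder c' i)
  <= rho ^+ hamming c c'.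
Proof.
rewrite /hamming (big_morph (GRing.exp rho) (exprD rho) (expr0 rho)).
apply: ler_prod => i _; rewrite bhattacharyya_ge0 !ffunE.
have le_rho s : bhattacharyya W s x0 x1 <= rho by rewrite /rho (bigD1 s) //= le_max lexx.
case: (c i); case: (c' i) => /=; rewrite ?expr0 ?expr1 ?bhattacharyyaxx //.
by rewrite bhattacharyyaC le_rho.
Qed.

Lemma ml_error_separated_code_le N M (w : 'I_M -> {ffun 'I_N -> bool}) r m0 :
  (forall m m', m != m' -> (r < hamming (w m) (w m'))%N) ->
  lambda_CSR W (binary_encoder \o w) (ml_decoder W (binary_encoder \o w) m0)
  <= M%:R * rho ^+ r.
Proof.
move=> sep_w; have bound_ge0 : 0 <= M%:R * rho ^+ r by rewrite mulr_ge0 ?exprn_ge0.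
apply: bigmax_le => // sN _; apply: bigmax_le => // m _.
apply: le_trans (ml_decoder_error_le W_stochastic _ _ _ _) _.
rewrite mulr_natl -[in leRHS](card_ord M) -sumr_const [leRHS](bigD1 m) //=.
rewrite -[leLHS]add0r lerD ?exprn_ge0 //.
apply: ler_sum => m' neq; apply: le_trans (prod_bhattacharyya_binary_le _ _ _) _.
by rewrite ler_wiXn2l ?(ltW rho_lt1) // ltnW // sep_w // eq_sym.
Qed.

(* The error bound is 2 ^ k * rho ^ (N/8) <= 2 ^ k * (rho ^ t) ^ k <= 2 ^ k * 4 ^ -k. *)
Lemma exists_binary_code_error_le t k N :
  rho ^+ t <= 4^-1 -> (t * k <= N %/ 8)%N ->
  exists (f : 'I_(2 ^ k) -> {ffun 'I_N -> X}) phi, lambda_CSR W f phi <= 2^-1 ^+ k.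
Proof.
move=> rho_t sep_tk.
have [C sepC sizeC] := exists_separated_code_large N.
have kC : (2 ^ k <= #|C|)%N.
  have t_gt0 : (0 < t)%N by move: rho_t; case: (t) => //; rewrite expr0; lra.
  by apply: leq_trans sizeC; rewrite leq_exp2l // (leq_trans _ sep_tk) ?leq_pmull.
pose w (m : 'I_(2 ^ k)) := enum_val (widen_ord kC m).
have sep_w m m' : m != m' -> (N %/ 8 < hamming (w m) (w m'))%N.
  move/separatedP: sepC => sepC neq; apply: sepC; rewrite ?enum_valP //.
  by apply: contra neq => /eqP/enum_val_inj/(congr1 val)/= eq_m; apply/eqP/val_inj.
pose m0 : 'I_(2 ^ k) := Ordinal (expn_gt0 2 k).
exists (binary_encoder \o w), (ml_decoder W (binary_encoder \o w) m0).
apply: le_trans (ml_error_separated_code_le m0 sep_w) _.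
apply: le_trans (_ : (2 ^ k)%N%:R * (4^-1) ^+ k <= _).
  rewrite ler_wpM2l //; apply: le_trans (ler_wiXn2l rho_ge0 (ltW rho_lt1) sep_tk) _.
  by rewrite exprM lerXn2r ?nnegrE ?exprn_ge0 ?invr_ge0.
by rewrite natrX -exprMn (_ : 2 * 4^-1 = 2^-1 :> R) //; field.
Qed.

Lemma achievable_pos : exists2 R0 : R, 0 < R0 & achievable_CSR_DC W R0.
Proof.
have [t rho_t] : exists t, rho ^+ t < 4^-1.
  by apply: exists_expr_lt; rewrite ?rho_ge0 ?rho_lt1 ?invr_gt0.
have t_gt0 : (0 < t)%N by move: rho_t; case: (t) => //; rewrite expr0; lra.
pose B := (8 * t)%N; have B_gt0 : (0 < B)%N by rewrite muln_gt0.
exists (2 * B)%:R^-1; first by rewrite invr_gt0 ltr0n muln_gt0.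
split=> [|eps eps_gt0]; first by rewrite invr_ge0.
have [K half_K] : exists K, 2^-1 ^+ K < eps.
  by apply: exists_expr_lt; rewrite // invr_ge0 ler0n invf_lt1 ?ltr1n.
exists (B * K.+1)%N => N N_ge; pose k := (N %/ B)%N.
have K_lt_k : (K < k)%N by rewrite leq_divRL // mulnC.
have sep_tk : (t * k <= N %/ 8)%N.
  by rewrite leq_divRL // (mulnC t) -mulnA (mulnC t); exact: leq_divM.
have [f [phi err]] := exists_binary_code_error_le (ltW rho_t) sep_tk.
exists (2 ^ k)%N, f, phi; split; first by rewrite expn_gt0.
split.
  rewrite log2_natrX; apply: lt_le_trans (divn_ratio_ge _ B_gt0 _).
    by rewrite ltrBlDr ltrDl.
  by apply: leq_trans N_ge; rewrite leq_pmulr.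
apply: le_lt_trans err (le_lt_trans _ half_K).
by rewrite ler_wiXn2l ?invr_ge0 ?ler0n ?invf_le1 ?ler1n // ltnW.
Qed.

End Achievability.

Section Converse.
Variables (R : realType) (X Y S : finType) (W : S -> X -> Y -> R).
Hypothesis W_stochastic : stochastic_avc W.

Lemma lambda_CSR_ge_half N M (f : 'I_M -> {ffun 'I_N -> X}) phi sN (m1 m2 : 'I_M) :
  m1 != m2 -> (forall yN, avc_prod W (f m1) sN yN = avc_prod W (f m2) sN yN) ->
  2^-1 <= lambda_CSR W f phi.
Proof.
move=> neq same.
pose err m := 1 - \sum_(yN | phi yN sN == m) avc_prod W (f m) sN yN.
have err_le m : err m <= lambda_CSR W f phi.
  by rewrite /lambda_CSR (bigD1 sN) //= le_max (bigD1 m) //= le_max lexx.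
have disjoint : \sum_(yN | phi yN sN == m1) avc_prod W (f m1) sN yN
              + \sum_(yN | phi yN sN == m2) avc_prod W (f m1) sN yN <= 1.
  rewrite -(avc_prod_sum1 W_stochastic (f m1) sN) big_mkcond [X in _ + X]big_mkcond.
  rewrite -big_split /=; apply: ler_sum => yN _.
  case: (phi yN sN =P m1) => [e1|_]; case: (phi yN sN =P m2) => [e2|_].
  - by move: neq; rewrite -e1 -e2 eqxx.
  - by rewrite addr0.
  - by rewrite add0r.
  - by rewrite addr0 avc_prod_ge0.
have same_sum : \sum_(yN | phi yN sN == m2) avc_prod W (f m2) sN yN
              = \sum_(yN | phi yN sN == m2) avc_prod W (f m1) sN yN.
  by apply: eq_bigr => yN _; rewrite same.
have := err_le m1; have := err_le m2; rewrite /err same_sum; lra.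
Qed.

Lemma lambda_CSR_ge_half_of_confusable N M (f : 'I_M -> {ffun 'I_N -> X}) phi :
  (forall x x', exists s, forall y, W s x y = W s x' y) -> (1 < M)%N ->
  2^-1 <= lambda_CSR W f phi.
Proof.
move=> confusable M_gt1.
pose m1 : 'I_M := Ordinal (ltnW M_gt1); pose m2 : 'I_M := Ordinal M_gt1.
have [sN sN_conf] := fin_all_exists (fun i => confusable (f m1 i) (f m2 i)).
apply: (@lambda_CSR_ge_half _ _ _ _ (finfun sN) m1 m2) => // yN.
by apply: eq_bigr => i _; rewrite ffunE sN_conf.
Qed.

Lemma distinguishable_of_achievable R0 : achievable_CSR_DC W R0 -> 0 < R0 ->
  exists x x', forall s, exists y, W s x y <> W s x' y.
Proof.
move=> [_ achR0] R0_gt0; apply: contrapT => /forallNP not_dist.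
have confusable x x' : exists s, forall y, W s x y = W s x' y.
  move/forallNP/(_ x')/existsNP: (not_dist x) => [s /forallNP same].
  by exists s => y; exact: contrapT (same y).
pose eps := Num.min R0 1 / 2.
have eps_gt0 : 0 < eps by rewrite divr_gt0 // lt_min R0_gt0 ltr01.
have eps_R0 : eps <= R0 / 2 by rewrite ler_pM2r ?invr_gt0 ?ltr0n // ge_min lexx.
have eps_1 : eps <= 1 / 2 by rewrite ler_pM2r ?invr_gt0 ?ltr0n // ge_min lexx orbT.
have [N0 codes] := achR0 eps eps_gt0.
have [M [f [phi [M_gt0 [rate err]]]]] := codes N0 (leqnn N0).
have M_gt1 : (1 < M)%N.
  case: M f phi M_gt0 rate err => [|[|M]] // f phi _ rate _.
  by move: rate; rewrite ln1 !mul0r; lra.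
have := lambda_CSR_ge_half_of_confusable f phi confusable M_gt1; lra.
Qed.

End Converse.

Theorem proposition2 (R : realType) (X Y S : finType) (W : S -> X -> Y -> R) :
  stochastic_avc W ->
  ((0%E < cap_CSR_DC W)%E <->
   exists x x' : X, forall s : S, exists y : Y, W s x y <> W s x' y).
Proof.
move=> W_stochastic; split.
  move=> /ereal_sup_gt[_ [R0 achR0 <-]]; rewrite lte_fin.
  exact: distinguishable_of_achievable achR0.
move=> [x0 [x1 x01_distinguishable]].
have [R0 R0_gt0 achR0] := achievable_pos W_stochastic x01_distinguishable.
apply: (@lt_le_trans _ _ R0%:E); first by rewrite lte_fin.
by apply: ereal_sup_ubound; exists R0.
Qed.
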